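(* Let $L$ be a finite-dimensional Lie algebra over a field $F$. Then $L$ is solvable if and only if every maximal subalgebra of $L$ has an abelian ideal completion.
   Context: For a nonzero subalgebra $X$ of $L$, the strict core $k(X)$ is the sum of all ideals of $L$ that are proper subalgebras of $X$ (it is $0$ if there are none). For a maximal subalgebra $M$ of $L$, a subalgebra $C$ is a completion of $M$ if $C\not\subseteq M$ but every proper subalgebra of $C$ that is an ideal of $L$ is contained in $M$; an ideal completion is a completion that is an ideal of $L$. $M$ has an abelian ideal completion if it has an ideal completion $C$ such that the Lie algebra $C/k(C)$ is abelian. *)

From HB Require Import structures.
From mathcomp Require Import all_boot all_algebra.
Set Implicit Arguments. Unset Strict Implicit. Unset Printing Implicit Defensive.
Import GRing.Theory.
Local Open Scope ring_scope.

Section Lie.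
Variables (F : fieldType) (L : vectType F) (br : L -> L -> L).

Definition is_lie_bracket : Prop :=
  [/\ (forall (a : F) (x y z : L), br (a *: x + y) z = a *: br x z + br y z),
      (forall (a : F) (x y z : L), br z (a *: x + y) = a *: br z x + br z y),
      (forall x : L, br x x = 0) &
      (forall x y z : L, br x (br y z) + br y (br z x) + br z (br x y) = 0)].

(* [U, V] : the subspace spanned by all brackets [u, v], u in U, v in V
   (by bilinearity it suffices to take basis vectors) *)
Definition lie_brs (U V : {vspace L}) : {vspace L} :=
  <<[seq br u v | u <- vbasis U, v <- vbasis V]>>%VS.

Definition subalgebra (U : {vspace L}) : Prop :=
  forall u v, u \in U -> v \in U -> br u v \in U.

Definition lie_ideal (I : {vspace L}) : Prop :=
  forall x u, u \in I -> br x u \in I /\ br u x \in I.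

Definition strict_core (X K : {vspace L}) : Prop :=
  (forall I : {vspace L}, lie_ideal I -> subalgebra I -> ((I <= X)%VS /\ I != X) -> (I <= K)%VS) /\
  (forall W : {vspace L},
     (forall I : {vspace L}, lie_ideal I -> subalgebra I -> ((I <= X)%VS /\ I != X) -> (I <= W)%VS) ->
     (K <= W)%VS).

Definition maximal_subalgebra (M : {vspace L}) : Prop :=
  [/\ subalgebra M, M != fullv &
      forall S : {vspace L}, subalgebra S -> (M <= S)%VS -> S = M \/ S = fullv].

Definition completion (M C : {vspace L}) : Prop :=
  [/\ subalgebra C, ~~ (C <= M)%VS &
      forall I : {vspace L}, subalgebra I -> ((I <= C)%VS /\ I != C) -> lie_ideal I -> (I <= M)%VS].

Definition ideal_completion (M C : {vspace L}) : Prop :=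
  completion M C /\ lie_ideal C.

(* C / k(C) is abelian, i.e. [C, C] is contained in k(C) *)
Definition abelian_mod_strict_core (C : {vspace L}) : Prop :=
  exists K : {vspace L}, strict_core C K /\ (lie_brs C C <= K)%VS.

Definition has_abelian_ideal_completion (M : {vspace L}) : Prop :=
  exists C : {vspace L}, ideal_completion M C /\ abelian_mod_strict_core C.

Definition derived (n : nat) : {vspace L} :=
  iter n (fun U => lie_brs U U) fullv.

Definition lie_solvable : Prop := exists n : nat, derived n = 0%VS.

End Lie.

(* For a maximal subalgebra [M] of a solvable [L], an ideal [C] of least dimension not
   contained in [M] is an ideal completion of [M]; its strict core contains every proper
   sub-ideal of [C], in particular [[C, C]].
   Conversely, we show that [L / A] is solvable for every ideal [A], by downward
   induction on [A]. Otherwise let [B] be an ideal minimal over [A]: it is unique and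
   [B <= [B, B] + A]. An abelian ideal completion of a maximal subalgebra [M] over [A],
   enlarged by [A], forces [B <= M]. So [B] lies in every maximal subalgebra over [A];
   by Fitting's decomposition every [br x], [x \in B], is then nilpotent modulo [A], and
   Engel's argument yields [[B, B] <= A], a contradiction. *)

From HB Require Import structures.
From mathcomp Require Import all_boot all_algebra.
From mathcomp Require Import zify.
From Stdlib Require Import Classical.
Set Implicit Arguments. Unset Strict Implicit. Unset Printing Implicit Defensive.
Import GRing.Theory.
Local Open Scope ring_scope.

Lemma ex_argmin (T : Type) (P : T -> Prop) (f : T -> nat) : (exists x, P x) ->
  exists x, P x /\ forall y, P y -> (f x <= f y)%N.
Proof.
move=> [x0 Px0]; suff ex_le : forall n x, P x -> (f x <= n)%N ->
    exists x, P x /\ forall y, P y -> (f x <= f y)%N by exact: ex_le _ _ Px0 (leqnn _).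
elim=> [|n IHn] x Px fx; first by exists x; split=> // y _; apply: leq_trans fx _.
have [[y [Py fy]]|noy] := classic (exists y, P y /\ (f y <= n)%N); first exact: IHn Py fy.
exists x; split=> // y Py; rewrite leqNgt; apply/negP=> fyx.
by apply: noy; exists y; split=> //; rewrite -ltnS (leq_trans fyx).
Qed.

Lemma ex_nonincreasing_stable (f : nat -> nat) : (forall k, (f k.+1 <= f k)%N) ->
  exists N, f N.+1 = f N.
Proof.
move=> f_noninc; apply: NNPP => nstable.
have decr k : (f k + k <= f 0)%N.
  elim: k => [|k IHk]; first by rewrite addn0.
  have lt_fk : (f k.+1 < f k)%N.
    by rewrite ltn_neqAle f_noninc andbT; apply/eqP => Ek; apply: nstable; exists k.
  by rewrite addnS; apply: leq_trans IHk; rewrite ltn_add2r.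
by have := decr (f 0).+1; rewrite addnS ltnNge leq_addl.
Qed.

Section Subspaces.
Variables (F : fieldType) (L : vectType F).
Implicit Types (P : {vspace L} -> Prop) (U V W : {vspace L}).

Lemma ex_maxdim P : (exists U, P U) ->
  exists U, P U /\ forall V, P V -> (\dim V <= \dim U)%N.
Proof.
move=> /(ex_argmin (fun U => \dim {:L} - \dim U)%N)[U [PU Umax]].
exists U; split=> // V /Umax; have := dimvS (subvf U); have := dimvS (subvf V); lia.
Qed.

Lemma ltn_dimvS U V : (U <= V)%VS -> U != V -> (\dim U < \dim V)%N.
Proof. by move=> sUV; rewrite (ltn_leqif (dimv_leqif_eq sUV)). Qed.

Lemma ex_greatest_vspace P : P 0%VS -> (forall U V, P U -> P V -> P (U + V)%VS) ->
  exists K, P K /\ forall U, P U -> (U <= K)%VS.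
Proof.
move=> P0 PD; have [K [PK Kmax]] := ex_maxdim (ex_intro _ _ P0).
exists K; split=> // U PU.
have /eqP -> : K == (U + K)%VS by rewrite eqEdim addvSr Kmax //; apply: PD.
exact: addvSl.
Qed.

Lemma ex_vspace_pred (Q : L -> Prop) : Q 0 ->
  (forall a x y, Q x -> Q y -> Q (a *: x + y)) ->
  exists V : {vspace L}, forall v, v \in V <-> Q v.
Proof.
move=> Q0 QZD; pose P V := forall v, v \in V -> Q v.
have P0 : P 0%VS by move=> v; rewrite memv0 => /eqP ->.
have PD U V : P U -> P V -> P (U + V)%VS.
  move=> PU PV v /memv_addP[u Uu [w Vw ->]].
  by rewrite -[u]scale1r; apply: QZD; [apply: PU | apply: PV].
have [K [PK Kmax]] := ex_greatest_vspace P0 PD.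
exists K => v; split=> [|Qv]; first exact: PK.
suff /subvP : (<[v]> <= K)%VS by apply; apply: memv_line.
by apply: Kmax => w /vlineP[k ->]; rewrite -[k *: v]addr0; apply: QZD.
Qed.

Lemma span_ind (X : seq L) (Q : L -> Prop) : Q 0 ->
  (forall a x y, Q x -> Q y -> Q (a *: x + y)) ->
  {in X, forall x, Q x} -> forall u, u \in <<X>>%VS -> Q u.
Proof.
move=> Q0 QZD QX; have [V HV] := ex_vspace_pred Q0 QZD.
suff /subvP sXV : (<<X>> <= V)%VS by move=> u /sXV /HV.
by apply/span_subvP => x /QX /HV.
Qed.

Lemma vspace_ind U (Q : L -> Prop) : Q 0 ->
  (forall a x y, Q x -> Q y -> Q (a *: x + y)) ->
  {in vbasis U, forall x, Q x} -> forall u, u \in U -> Q u.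
Proof.
move=> Q0 QZD QX u; rewrite -(span_basis (vbasisP U)); exact: span_ind.
Qed.

End Subspaces.

Section LieBracket.
Variables (F : fieldType) (L : vectType F) (br : L -> L -> L).
Hypothesis hbr : is_lie_bracket br.
Implicit Types (x y z : L) (U V W I J : {vspace L}).

Lemma brZDl a x y z : br (a *: x + y) z = a *: br x z + br y z.
Proof. by case: hbr. Qed.

Lemma brZDr a x y z : br z (a *: x + y) = a *: br z x + br z y.
Proof. by case: hbr. Qed.

Lemma brxx x : br x x = 0.
Proof. by case: hbr. Qed.

Lemma brDl x y z : br (x + y) z = br x z + br y z.
Proof. by rewrite -[x]scale1r brZDl !scale1r. Qed.

Lemma brDr x y z : br z (x + y) = br z x + br z y.
Proof. by rewrite -[x]scale1r brZDr !scale1r. Qed.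

Lemma br0l z : br 0 z = 0.
Proof. by apply: (@addIr _ (br 0 z)); rewrite -brDl !add0r. Qed.

Lemma br0r z : br z 0 = 0.
Proof. by apply: (@addIr _ (br z 0)); rewrite -brDr !add0r. Qed.

Lemma brZl a x z : br (a *: x) z = a *: br x z.
Proof. by rewrite -[a *: x]addr0 brZDl br0l addr0. Qed.

Lemma brZr a x z : br z (a *: x) = a *: br z x.
Proof. by rewrite -[a *: x]addr0 brZDr br0r addr0. Qed.

Lemma brNr x z : br z (- x) = - br z x.
Proof. by rewrite -scaleN1r brZr scaleN1r. Qed.

Lemma brBr x y z : br z (x - y) = br z x - br z y.
Proof. by rewrite brDr brNr. Qed.

Lemma brC x y : br x y = - br y x.
Proof.
apply/eqP; rewrite -addr_eq0.
by have := brxx (x + y); rewrite brDl !brDr !brxx add0r addr0 => ->.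
Qed.

Lemma jacobi x y z : br x (br y z) = br (br x y) z + br y (br x z).
Proof.
have [_ _ _ jac] := hbr.
rewrite (brC (br x y)) (brC x z) brNr -[LHS]subr0 -(jac x y z).
by rewrite !opprD -!addrA addNKr addrC.
Qed.

Lemma iter_brZD n x a y z :
  iter n (br x) (a *: y + z) = a *: iter n (br x) y + iter n (br x) z.
Proof. by elim: n => //= n ->; rewrite brZDr. Qed.

Lemma iter_br0 n x : iter n (br x) 0 = 0.
Proof. by elim: n => //= n ->; rewrite br0r. Qed.

Lemma iter_brD n x y z : iter n (br x) (y + z) = iter n (br x) y + iter n (br x) z.
Proof. by rewrite -[y]scale1r iter_brZD !scale1r. Qed.

Lemma iter_brB n x y z : iter n (br x) (y - z) = iter n (br x) y - iter n (br x) z.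
Proof. by elim: n => //= n ->; rewrite brBr. Qed.

Lemma mem_lie_brs U V u v : u \in U -> v \in V -> br u v \in lie_brs br U V.
Proof.
have memb v0 : v0 \in vbasis V -> forall u0, u0 \in U -> br u0 v0 \in lie_brs br U V.
  move=> Vv0; apply: vspace_ind => [|a x y Hx Hy|u0 Uu0].
  - by rewrite br0l mem0v.
  - by rewrite brZDl memvD // memvZ.
  - by apply: memv_span; apply: allpairs_f.
move=> Uu; move: v; apply: vspace_ind => [|a x y Hx Hy|v0 Vv0].
- by rewrite br0r mem0v.
- by rewrite brZDr memvD // memvZ.
- exact: memb.
Qed.

Lemma lie_brs_subv U V W : (forall u v, u \in U -> v \in V -> br u v \in W) ->
  (lie_brs br U V <= W)%VS.
Proof.
move=> sUVW; apply/span_subvP => _ /allpairsP[[u v] [/= Uu Vv ->]].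
by apply: sUVW; apply: vbasis_mem.
Qed.

Lemma lie_brsS U U' V V' : (U <= U')%VS -> (V <= V')%VS ->
  (lie_brs br U V <= lie_brs br U' V')%VS.
Proof.
move=> /subvP sUU' /subvP sVV'; apply: lie_brs_subv => u v Uu Vv.
by apply: mem_lie_brs; [apply: sUU' | apply: sVV'].
Qed.

Lemma lie_brs_ind U V (Q : L -> Prop) : Q 0 ->
  (forall a x y, Q x -> Q y -> Q (a *: x + y)) ->
  (forall u v, u \in U -> v \in V -> Q (br u v)) ->
  forall w, w \in lie_brs br U V -> Q w.
Proof.
move=> Q0 QZD QUV; have [W HW] := ex_vspace_pred Q0 QZD.
suff /subvP sUVW : (lie_brs br U V <= W)%VS by move=> w /sUVW /HW.
by apply: lie_brs_subv => u v Uu Vv; apply/HW; apply: QUV.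
Qed.

Lemma ideal_subalgebra I : lie_ideal br I -> subalgebra br I.
Proof. by move=> idI u v _ Iv; case: (idI u v Iv). Qed.

Lemma lie_idealP I : (forall x u, u \in I -> br x u \in I) -> lie_ideal br I.
Proof. by move=> brI x u Iu; split; [apply: brI | rewrite brC memvN; apply: brI]. Qed.

Lemma lie_ideal_brs I J : lie_ideal br I -> lie_ideal br J ->
  lie_ideal br (lie_brs br I J).
Proof.
move=> idI idJ; apply: lie_idealP => x; apply: lie_brs_ind => [|a y z Hy Hz|u v Iu Jv].
- by rewrite br0r mem0v.
- by rewrite brZDr memvD // memvZ.
- rewrite jacobi memvD //; apply: mem_lie_brs => //.
  + by case: (idI x u Iu).
  + by case: (idJ x v Jv).
Qed.

Lemma lie_ideal_addv I J : lie_ideal br I -> lie_ideal br J -> lie_ideal br (I + J)%VS.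
Proof.
move=> idI idJ; apply: lie_idealP => x _ /memv_addP[u Iu [v Jv ->]].
by rewrite brDr memv_add //; [case: (idI x u Iu) | case: (idJ x v Jv)].
Qed.

Lemma lie_ideal_capv I J : lie_ideal br I -> lie_ideal br J -> lie_ideal br (I :&: J)%VS.
Proof.
move=> idI idJ; apply: lie_idealP => x w; rewrite !memv_cap => /andP[Iw Jw].
by apply/andP; split; [case: (idI x w Iw) | case: (idJ x w Jw)].
Qed.

Lemma lie_ideal0 : lie_ideal br 0%VS.
Proof. by apply: lie_idealP => x u; rewrite memv0 => /eqP ->; rewrite br0r mem0v. Qed.

Lemma lie_idealf : lie_ideal br fullv.
Proof. by apply: lie_idealP => x u _; apply: memvf. Qed.

Lemma subalgebra_addv_ideal U I : subalgebra br U -> lie_ideal br I ->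
  subalgebra br (U + I)%VS.
Proof.
move=> algU idI _ _ /memv_addP[s Us [a Ia ->]] /memv_addP[t Ut [b Ib ->]].
rewrite brDl !brDr -addrA memv_add ?algU // memvD //; first by case: (idI s b Ib).
by rewrite memvD //; [case: (idI t a Ia) | case: (idI a b Ib)].
Qed.

Lemma ideal_iter_br I x a : lie_ideal br I -> a \in I -> forall k, iter k (br x) a \in I.
Proof. by move=> idI Ia; elim=> //= k IHk; case: (idI x _ IHk). Qed.

End LieBracket.

Section LieSubspaces.
Variables (F : fieldType) (L : vectType F) (br : L -> L -> L).
Hypothesis hbr : is_lie_bracket br.
Implicit Types (A B C I J K M S : {vspace L}).

Lemma derivedS n : derived br n.+1 = lie_brs br (derived br n) (derived br n).
Proof. by []. Qed.

Lemma derived_subvD m n : (derived br (m + n) <= derived br m)%VS.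
Proof.
elim: m => [|m IHm]; first exact: subvf.
by rewrite addSn !derivedS; apply: lie_brsS.
Qed.

Lemma perfect_subv_derived C : (C <= lie_brs br C C)%VS -> forall n, (C <= derived br n)%VS.
Proof.
move=> CCC; elim=> [|n IHn]; first exact: subvf.
by apply: subv_trans CCC _; apply: lie_brsS.
Qed.

Lemma ex_strict_core C : exists K, strict_core br C K.
Proof.
pose P W := forall V : {vspace L}, (forall I, lie_ideal br I -> subalgebra br I ->
  (I <= C)%VS /\ I != C -> (I <= V)%VS) -> (W <= V)%VS.
have P0 : P 0%VS by move=> V _; apply: sub0v.
have PD U W : P U -> P W -> P (U + W)%VS.
  by move=> PU PW V ubV; rewrite subv_add PU ?PW.
have [K [PK Kmax]] := ex_greatest_vspace P0 PD.
exists K; split=> [I idI algI ltIC|]; last exact: PK.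
by apply: Kmax => V ubV; apply: ubV.
Qed.

Lemma ex_maximal_subalgebra S : subalgebra br S -> S != fullv ->
  exists M, maximal_subalgebra br M /\ (S <= M)%VS.
Proof.
move=> algS SnF; pose P M := [/\ subalgebra br M, (S <= M)%VS & M != fullv].
have [M [[algM SM MnF] Mmax]] := ex_maxdim (ex_intro P S (And3 algS (subvv S) SnF)).
exists M; split=> //; split=> // T algT MT.
have [->|TnF] := eqVneq T fullv; [by right | left].
by apply/esym/eqP; rewrite eqEdim MT Mmax //; split=> //; apply: subv_trans MT.
Qed.

End LieSubspaces.

Section Solvable.
Variables (F : fieldType) (L : vectType F) (br : L -> L -> L).
Hypothesis hbr : is_lie_bracket br.
Implicit Types (C I K M : {vspace L}).

Lemma ex_min_ideal_not_subv M : M != fullv ->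
  exists C, [/\ lie_ideal br C, ~~ (C <= M)%VS &
    forall I, lie_ideal br I -> (I <= C)%VS -> I != C -> (I <= M)%VS].
Proof.
move=> MnF; pose P C := lie_ideal br C /\ ~~ (C <= M)%VS.
have Pf : P fullv.
  by split; [apply: lie_idealf | apply: contra MnF => fM; rewrite eqEsubv fM subvf].
have [C [[idC CnM] Cmin]] := ex_argmin (fun C => \dim C) (ex_intro P _ Pf).
exists C; split=> // I idI IC InC; apply: contraT => InM.
by have := Cmin I (conj idI InM); rewrite leqNgt ltn_dimvS.
Qed.

Lemma solvable_ideal_completion (M : {vspace L}) : lie_solvable br ->
  maximal_subalgebra br M -> has_abelian_ideal_completion br M.
Proof.
move=> [n derived_n] [_ MnF _].
have [C [idC CnM Cmin]] := ex_min_ideal_not_subv MnF.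
have [K coreK] := ex_strict_core br C.
exists C; split; first split=> //.
  by split=> // [|I _ [IC InC] idI]; [apply: ideal_subalgebra | apply: Cmin].
exists K; split=> //; have [Kub _] := coreK.
have idCC := lie_ideal_brs hbr idC idC.
apply: Kub => //; first exact: ideal_subalgebra.
split; first by apply: lie_brs_subv => u v _ Cv; case: (idC u v Cv).
apply: contraNneq CnM => CC; have CCC : (C <= lie_brs br C C)%VS by rewrite CC.
have := perfect_subv_derived hbr CCC n.
by rewrite derived_n => /subv_trans; apply; apply: sub0v.
Qed.

End Solvable.

Section Fitting.
Variables (F : fieldType) (L : vectType F) (br : L -> L -> L).
Hypothesis hbr : is_lie_bracket br.
Variable x : L.

Definition ad_image k : {vspace L} := <<[seq iter k (br x) v | v <- vbasis fullv]>>%VS.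

Lemma mem_ad_image k y : y \in ad_image k <-> exists w, y = iter k (br x) w.
Proof.
split=> [|[w ->]].
  move: y; apply: span_ind => [|a _ _ [u ->] [v ->]|_ /mapP[v _ ->]]; last by exists v.
    by exists 0; rewrite (iter_br0 hbr).
  by exists (a *: u + v); rewrite (iter_brZD hbr).
move: w (memvf w).
apply: (vspace_ind (Q := fun v => iter k (br x) v \in ad_image k)) => [|a u v Hu Hv|v Vv].
- by rewrite (iter_br0 hbr) mem0v.
- by rewrite (iter_brZD hbr) // memvD // memvZ.
- by apply: memv_span; apply: map_f.
Qed.

Lemma ad_imageS k : (ad_image k.+1 <= ad_image k)%VS.
Proof.
by apply/subvP => y /mem_ad_image[w ->]; apply/mem_ad_image; exists (br x w); rewrite iterSr.
Qed.

Lemma ad_image_stable N : ad_image N.+1 = ad_image N ->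
  forall j, ad_image (j + N) = ad_image N.
Proof.
move=> stableN; elim=> // j IHj; apply/eqP; rewrite eqEsubv addSn; apply/andP; split.
  by rewrite -IHj; apply: ad_imageS.
rewrite -stableN; apply/subvP => _ /mem_ad_image[w ->].
have /mem_ad_image[w' Ew'] : iter N (br x) w \in ad_image (j + N).
  by rewrite IHj; apply/mem_ad_image; exists w.
by apply/mem_ad_image; exists w'; rewrite iterS Ew'.
Qed.

(* [y = (y - b) + b] with [y - b] in the Fitting null component of [br x] and
   [b = iter N.+1 (br x) w] in its stable image. *)
Lemma fitting_decomposition : exists N, forall y, exists w,
  iter N.+1 (br x) (y - iter N.+1 (br x) w) = 0.
Proof.
have [N dim_stable] := ex_nonincreasing_stable (fun k => dimvS (ad_imageS k)).
have stableN : ad_image N.+1 = ad_image N.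
  by apply/eqP; rewrite eqEdim ad_imageS /= dim_stable.
have stable2N : ad_image (N.+2 + N) = ad_image N.+1 by rewrite ad_image_stable.
exists N => y.
have /mem_ad_image[w Ew] : iter N.+1 (br x) y \in ad_image (N.+2 + N).
  by rewrite stable2N; apply/mem_ad_image; exists y.
by exists w; rewrite (iter_brB hbr) Ew addSnnS iterD subrr.
Qed.

Lemma iter_br_nil a b y z : iter a (br x) y = 0 -> iter b (br x) z = 0 ->
  iter (a + b) (br x) (br y z) = 0.
Proof.
move Eab : (a + b)%N => n.
elim: n a b y z Eab => [|n IHn] [|a] [|b] y z Eab Ey Ez //.
all: try by have -> : y = 0 := Ey; rewrite (br0l hbr) (iter_br0 hbr).
all: try by have -> : z = 0 := Ez; rewrite (br0r hbr) (iter_br0 hbr).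
move: Eab; rewrite addSn => -[Eab].
rewrite iterSr (jacobi hbr) (iter_brD hbr).
rewrite (IHn a b.+1) -?iterSr // (IHn a.+1 b) -?iterSr ?addr0 //.
by rewrite addSnnS.
Qed.

Lemma ex_ad_nilspace : exists K : {vspace L},
  subalgebra br K /\ forall y, y \in K <-> exists k, iter k (br x) y = 0.
Proof.
have nil_ZD a y z : (exists k, iter k (br x) y = 0) -> (exists k, iter k (br x) z = 0) ->
    exists k, iter k (br x) (a *: y + z) = 0.
  move=> [k1 Ey] [k2 Ez]; exists (k1 + k2)%N; rewrite (iter_brZD hbr).
  have -> : iter (k1 + k2) (br x) y = 0 by rewrite addnC iterD Ey (iter_br0 hbr).
  have -> : iter (k1 + k2) (br x) z = 0 by rewrite iterD Ez (iter_br0 hbr).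
  by rewrite scaler0 addr0.
have [K memK] := ex_vspace_pred (ex_intro _ 0%N (erefl _)) nil_ZD.
exists K; split=> // u v /memK[a Eu] /memK[b Ev].
by apply/memK; exists (a + b)%N; apply: iter_br_nil.
Qed.

End Fitting.

Section Frattini.
Variables (F : fieldType) (L : vectType F) (br : L -> L -> L).
Hypothesis hbr : is_lie_bracket br.

Definition ad_nilpotent_mod (A S : {vspace L}) : Prop :=
  forall s, s \in S -> forall y, exists k, iter k (br s) y \in A.

(* Otherwise the Fitting null component of some [br x] plus [A] lies in a maximal
   subalgebra, which also contains the stable image of [br x] (inside [B]). *)
Lemma frattini_ad_nilpotent (A B : {vspace L}) : lie_ideal br A -> lie_ideal br B ->
  (forall M, maximal_subalgebra br M -> (A <= M)%VS -> (B <= M)%VS) ->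
  ad_nilpotent_mod A B.
Proof.
move=> idA idB subBM x Bx; have [K [algK memK]] := ex_ad_nilspace hbr x.
suff /eqP KA : (K + A == fullv)%VS.
  move=> y; have /memv_addP[y0 /memK[k Ey0] [a Aa ->]] : y \in (K + A)%VS.
    by rewrite KA memvf.
  by exists k; rewrite (iter_brD hbr) Ey0 add0r; apply: ideal_iter_br.
apply: contraT => KAnF.
have [M [maxM KAM]] := ex_maximal_subalgebra (subalgebra_addv_ideal hbr algK idA) KAnF.
have /subvP BM := subBM M maxM (subv_trans (addvSr K A) KAM).
have [_ MnF _] := maxM; case/negP: MnF; rewrite eqEsubv subvf /=.
apply/subvP => y _; have [N fitN] := fitting_decomposition hbr x; have [w Ew] := fitN y.
rewrite -(subrK (iter N.+1 (br x) w) y) memvD //.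
  by apply: (subvP KAM); apply: (subvP (addvSl K A)); apply/memK; exists N.+1.
by apply: BM; case: (idB (iter N (br x) w) x Bx).
Qed.

End Frattini.

Lemma ex_last_false (p : nat -> bool) k : ~~ p 0 -> p k -> exists j, ~~ p j /\ p j.+1.
Proof.
move=> np0; elim: k => [|k IHk] pk; first by rewrite pk in np0.
by case pk': (p k); [apply: IHk | exists k; rewrite pk'].
Qed.

Section Engel.
Variables (F : fieldType) (L : vectType F) (br : L -> L -> L).
Hypothesis hbr : is_lie_bracket br.
Implicit Types (A S T U W : {vspace L}).

Definition ad_stable S U := forall s u, s \in S -> u \in U -> br s u \in U.

Lemma subalgebra_addv_line T s0 : subalgebra br T ->
  (forall t, t \in T -> br t s0 \in T) -> subalgebra br (T + <[s0]>)%VS.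
Proof.
move=> algT Ts0 u v /memv_addP[t Tt [_ /vlineP[c ->] ->]].
move=> /memv_addP[t' Tt' [_ /vlineP[c' ->] ->]].
apply: (subvP (addvSl T <[s0]>)).
rewrite (brDl hbr) !(brDr hbr) !(brZl hbr) !(brZr hbr) (brxx hbr) !scaler0 addr0.
by rewrite (brC hbr s0) !memvD ?memvZ ?memvN ?Ts0 // algT.
Qed.

(* Iterating [br s0] on a vector [v] killed by [T] modulo [W] stays killed by [T],
   by the Jacobi identity; the last iterate outside [W] is also killed by [s0]. *)
Lemma ex_fixed_vector_line T s0 U W v :
  (forall t, t \in T -> br t s0 \in T) -> ad_stable <[s0]> U -> ad_stable (T + <[s0]>) W ->
  (exists k, iter k (br s0) v \in W) -> v \in U -> v \notin W ->
  (forall t, t \in T -> br t v \in W) ->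
  exists u, [/\ u \in U, u \notin W & forall s, s \in (T + <[s0]>)%VS -> br s u \in W].
Proof.
move=> Ts0 stU stW [k Wk] Uv nWv Tv.
have s0_in := memv_line s0; have s0_inS := subvP (addvSr T <[s0]>) _ s0_in.
have iter_in j : iter j (br s0) v \in U /\ forall t, t \in T -> br t (iter j (br s0) v) \in W.
  elim: j => [|j [IU IT]] //=; split; first exact: stU.
  move=> t Tt; rewrite (jacobi hbr) memvD ?IT ?Ts0 //.
  by apply: stW s0_inS _; apply: IT.
have [j [nWj Wj1]] := @ex_last_false (fun j => iter j (br s0) v \in W) k nWv Wk.
exists (iter j (br s0) v); have [IU IT] := iter_in j; split=> // s.
move=> /memv_addP[t Tt [_ /vlineP[c ->] ->]].
by rewrite (brDl hbr) (brZl hbr) memvD ?memvZ // IT.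
Qed.

Lemma ad_stableS S S' U : (S' <= S)%VS -> ad_stable S U -> ad_stable S' U.
Proof. by move=> /subvP sS'S stU s u /sS'S; apply: stU. Qed.

(* Engel's argument: [T] is a maximal proper subalgebra of [S] over [A]; by induction
   [T] normalizes a line [<[s0]>] outside it, so [S = T + <[s0]>]. *)
Lemma engel_fixed_vector A S U W : lie_ideal br A -> subalgebra br S -> (A <= S)%VS ->
  ad_nilpotent_mod br A S -> ~~ (U <= W)%VS -> (A <= W)%VS ->
  ad_stable S U -> ad_stable S W ->
  exists u, [/\ u \in U, u \notin W & forall s, s \in S -> br s u \in W].
Proof.
move=> idA; move: {2}(\dim S).+1 (ltnSn (\dim S)) => n.
elim: n S U W => [//|n IHn] S U W dimS algS AS nilS nUW AW stU stW.
have [SA|nSA] := boolP (S <= A)%VS.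
  have /subvPn[u Uu nWu] := nUW; exists u; split=> // s /(subvP SA) As.
  by apply: (subvP AW); case: (idA u s As).
pose P T := [/\ subalgebra br T, (A <= T)%VS, (T <= S)%VS & T != S].
have PA : P A.
  by split=> //; [apply: ideal_subalgebra | apply: contraNneq nSA => <-].
have [T [[algT AT TS TnS] Tmax]] := ex_maxdim (ex_intro P A PA).
have dimT : (\dim T < n)%N by apply: leq_trans (ltn_dimvS TS TnS) _; rewrite -ltnS.
have nilT : ad_nilpotent_mod br A T by move=> s /(subvP TS); apply: nilS.
have nST : ~~ (S <= T)%VS by apply: contra TnS => ST; rewrite eqEsubv TS.
have stTS : ad_stable T S by apply: ad_stableS TS _ => s u; apply: algS.
have [s0 [Ss0 nTs0 Ts0]] := IHn T S T dimT algT AT nilT nST AT stTS algT.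
have ST : (T + <[s0]>)%VS = S.
  have sTS : (T + <[s0]> <= S)%VS by rewrite subv_add TS -memvE.
  apply/eqP; apply: contraT => neS.
  have PTs0 : P (T + <[s0]>)%VS.
    by split=> //; [apply: subalgebra_addv_line | apply: subv_trans (addvSl _ _)].
  have := Tmax _ PTs0; rewrite leqNgt ltn_dimvS ?addvSl //.
  apply: contraNneq nTs0 => ->; exact: subvP (addvSr _ _) _ (memv_line s0).
have [v [Uv nWv Tv]] := IHn T U W dimT algT AT nilT nUW AW
  (ad_stableS TS stU) (ad_stableS TS stW).
rewrite -ST; apply: ex_fixed_vector_line Uv nWv Tv => //; rewrite ?ST //.
- by apply: ad_stableS stU; rewrite -ST addvSr.
- by have [k Ak] := nilS s0 Ss0 v; exists k; apply: (subvP AW).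
Qed.

End Engel.

Section SolvableMod.
Variables (F : fieldType) (L : vectType F) (br : L -> L -> L).
Hypothesis hbr : is_lie_bracket br.
Implicit Types (A B C I J M : {vspace L}).

(* [L / A] is solvable. *)
Definition solvable_mod A : Prop := exists n, (derived br n <= A)%VS.

Lemma solvable_mod_capv I J : solvable_mod I -> solvable_mod J -> solvable_mod (I :&: J)%VS.
Proof.
move=> [m dI] [n dJ]; exists (m + n)%N; rewrite subv_cap.
rewrite (subv_trans (derived_subvD hbr m n)) // addnC.
by rewrite (subv_trans (derived_subvD hbr n m)).
Qed.

Lemma abelian_ideal_completionP M : has_abelian_ideal_completion br M ->
  exists C, [/\ lie_ideal br C, ~~ (C <= M)%VS, (lie_brs br C C <= M)%VS &
    forall I, lie_ideal br I -> (I <= C)%VS -> I != C -> (I <= M)%VS].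
Proof.
move=> [C [[[_ CnM Cmin] idC] [K [[_ Klub] CCK]]]].
have Cmin' I : lie_ideal br I -> (I <= C)%VS -> I != C -> (I <= M)%VS.
  by move=> idI IC InC; apply: Cmin (ideal_subalgebra idI) (conj IC InC) idI.
exists C; split=> //; apply: subv_trans CCK _; apply: Klub => I idI _ [IC InC].
exact: Cmin'.
Qed.

Lemma abelian_ideal_completion_addv A M : lie_ideal br A -> (A <= M)%VS ->
  has_abelian_ideal_completion br M ->
  exists C, [/\ lie_ideal br C, (A <= C)%VS, ~~ (C <= M)%VS, (lie_brs br C C <= M)%VS &
    forall J, lie_ideal br J -> (A <= J)%VS -> (J <= C)%VS -> J != C -> (J <= M)%VS].
Proof.
move=> idA AM /abelian_ideal_completionP[C [idC CnM CCM Cmin]].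
have /subvP sAM := AM.
exists (C + A)%VS; split; first exact: lie_ideal_addv.
- exact: addvSr.
- by apply: contra CnM; apply: subv_trans; apply: addvSl.
- apply: lie_brs_subv => _ _ /memv_addP[c Cc [a Aa ->]] /memv_addP[c' Cc' [a' Aa' ->]].
  rewrite (brDl hbr) !(brDr hbr) -addrA; apply: memvD.
    by apply: (subvP CCM); apply: mem_lie_brs.
  apply: memvD; first by apply: sAM; case: (idA c a' Aa').
  by apply: memvD; apply: sAM; [case: (idA c' a Aa) | case: (idA a a' Aa')].
move=> J idJ AJ JCA JnCA; have idJC := lie_ideal_capv hbr idJ idC.
have JCM : (J :&: C <= M)%VS.
  apply: Cmin (capvSr J C) _ => //.
  by apply: contraNneq JnCA => JC; rewrite eqEsubv JCA subv_add AJ -JC capvSl.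
apply/subvP => y Jy; have /memv_addP[c Cc [a Aa Ey]] := subvP JCA y Jy.
have Jc : c \in J by rewrite -(addrK a c) -Ey memvB // (subvP AJ).
by rewrite Ey; apply: memvD; [apply: (subvP JCM); rewrite memv_cap Jc | apply: sAM].
Qed.

End SolvableMod.

Section MinimalIdealOver.
Variables (F : fieldType) (L : vectType F) (br : L -> L -> L).
Hypothesis hbr : is_lie_bracket br.
Variables A B : {vspace L}.
Hypotheses (idA : lie_ideal br A) (nsolA : ~ solvable_mod br A).
Hypothesis solvable_mod_above : forall J, lie_ideal br J -> (A <= J)%VS -> J != A ->
  solvable_mod br J.
Hypotheses (idB : lie_ideal br B) (AB : (A <= B)%VS) (BnA : B != A).
Hypothesis minB : forall J, lie_ideal br J -> (A <= J)%VS -> J != A -> (\dim B <= \dim J)%N.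

(* Otherwise [B :&: J = A], and [L / A] would be solvable as [L / B] and [L / J] are. *)
Lemma min_ideal_subv J : lie_ideal br J -> (A <= J)%VS -> J != A -> (B <= J)%VS.
Proof.
move=> idJ AJ JnA; have [BJ|BJnA] := eqVneq (B :&: J)%VS A.
  by case: nsolA; rewrite -BJ; apply: (solvable_mod_capv hbr); apply: solvable_mod_above.
have AJB : (A <= B :&: J)%VS by rewrite subv_cap AB AJ.
have := minB (lie_ideal_capv hbr idB idJ) AJB BJnA.
by rewrite (geq_leqif (dimv_leqif_eq (capvSl B J))) => /eqP <-; apply: capvSr.
Qed.

Lemma min_ideal_perfect : (B <= lie_brs br B B + A)%VS.
Proof.
apply: min_ideal_subv; [|exact: addvSr|].
  by apply: lie_ideal_addv => //; apply: lie_ideal_brs.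
apply: contra_not_neq nsolA => BBA; have [n dB] := solvable_mod_above idB AB BnA.
exists n.+1; rewrite derivedS -BBA (subv_trans (lie_brsS hbr dB dB)) ?addvSl //.
Qed.

Lemma min_ideal_subv_maximal M : has_abelian_ideal_completion br M -> (A <= M)%VS ->
  (B <= M)%VS.
Proof.
move=> aicM AM.
have [C [idC AC CnM CCM Cmin]] := abelian_ideal_completion_addv hbr idA AM aicM.
have CnA : C != A by apply: contraNneq CnM => ->.
have [BC|BnC] := eqVneq B C; last exact: Cmin (min_ideal_subv idC AC CnA) BnC.
by apply: subv_trans min_ideal_perfect _; rewrite subv_add AM andbT BC.
Qed.

(* By Engel, some [u] of [B] outside [A] has [[B, u] <= A]; such vectors form an ideal
   over [A], which must then contain [B]. *)
Lemma min_ideal_abelian_mod : ad_nilpotent_mod br A B -> (lie_brs br B B <= A)%VS.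
Proof.
move=> nilB; have algB := ideal_subalgebra idB.
have nBA : ~~ (B <= A)%VS by apply: contra BnA => BA; rewrite eqEsubv BA.
have [u [Bu nAu Bu_A]] := engel_fixed_vector hbr idA algB AB nilB nBA (subvv A)
  (fun s v _ Bv => proj1 (idB s Bv)) (fun s v _ Av => proj1 (idA s Av)).
pose Q z := z \in B /\ forall b, b \in B -> br b z \in A.
have Q0 : Q 0 by split=> [|b _]; rewrite ?(br0r hbr) mem0v.
have QZD a y z : Q y -> Q z -> Q (a *: y + z).
  move=> [By Ay] [Bz Az]; split=> [|b Bb]; first by rewrite memvD ?memvZ.
  by rewrite (brZDr hbr) memvD ?memvZ ?Ay ?Az.
have [Z memZ] := ex_vspace_pred Q0 QZD.
have idZ : lie_ideal br Z.
  apply: (lie_idealP hbr) => x z /memZ[Bz Az]; apply/memZ; split; first by case: (idB x Bz).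
  move=> b Bb; rewrite (jacobi hbr) memvD ?Az //; last by case: (idA x (Az b Bb)).
  by case: (idB x Bb).
have AZ : (A <= Z)%VS.
  by apply/subvP => a Aa; apply/memZ; split=> [|b _]; [apply: (subvP AB) | case: (idA b Aa)].
have ZnA : Z != A by apply: contraNneq nAu => <-; apply/memZ.
have /subvP BZ := min_ideal_subv idZ AZ ZnA.
by apply: lie_brs_subv => b z Bb /BZ /memZ[_]; apply.
Qed.

Lemma min_ideal_not_all_abelian_completions :
  ~ (forall M, maximal_subalgebra br M -> has_abelian_ideal_completion br M).
Proof.
move=> aic.
have subBM M (maxM : maximal_subalgebra br M) := min_ideal_subv_maximal (aic M maxM).
have BBA := min_ideal_abelian_mod (frattini_ad_nilpotent hbr idA idB subBM).
case/negP: BnA; rewrite eqEsubv AB andbT.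
by apply: subv_trans min_ideal_perfect _; rewrite subv_add BBA subvv.
Qed.

End MinimalIdealOver.

Lemma solvable_mod_ideal (F : fieldType) (L : vectType F) (br : L -> L -> L) :
  is_lie_bracket br ->
  (forall M, maximal_subalgebra br M -> has_abelian_ideal_completion br M) ->
  forall A, lie_ideal br A -> solvable_mod br A.
Proof.
move=> hbr aic A idA; move: {2}(\dim {:L} - \dim A)%N (leqnn (\dim {:L} - \dim A)) => m.
elim: m A idA => [|m IHm] A idA codimA.
  exists 0%N; have /eqP -> : A == fullv by rewrite eqEdim subvf -subn_eq0 -leqn0.
  exact: subvv.
apply: NNPP => nsolA.
have solJ J : lie_ideal br J -> (A <= J)%VS -> J != A -> solvable_mod br J.
  move=> idJ AJ JnA; apply: IHm => //.
  rewrite eq_sym in JnA; have := ltn_dimvS AJ JnA; have := dimvS (subvf J); lia.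
pose P J := [/\ lie_ideal br J, (A <= J)%VS & J != A].
have Pf : P fullv.
  by split; [apply: lie_idealf | apply: subvf | apply: contra_not_neq nsolA => <-; exists 0%N].
have [B [[idB AB BnA] Bmin]] := ex_argmin (fun J => \dim J) (ex_intro P _ Pf).
apply: (min_ideal_not_all_abelian_completions hbr idA nsolA solJ idB AB BnA) aic.
by move=> J idJ AJ JnA; apply: Bmin.
Qed.

Unset Implicit Arguments.

Theorem theorem2p10 (F : fieldType) (L : vectType F) (br : L -> L -> L)
  (hbr : is_lie_bracket br) :
  lie_solvable br <->
  (forall M : {vspace L}, maximal_subalgebra br M -> has_abelian_ideal_completion br M).
Proof.
split=> [solL M|aic]; first exact: solvable_ideal_completion.
have [n derived_n] := solvable_mod_ideal hbr aic (lie_ideal0 hbr).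
by exists n; apply/eqP; rewrite -subv0.
Qed.
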